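(* In the setting described in the context, the convex program $$\min_{q\in\mathbb R^{\mathcal V}}\ \sum_{v\in\mathcal V}-p_v\log q_v\quad\text{s.t.}\quad q\ge\mathbf 0,\ Mq\le\mathbf 1$$ has a minimizer $q^*$, and there is a soft classifier $h^*$ with $q^{h^*}_v\ge q^*_v$ for all $v\in\mathcal V$ such that $$\mathbb E_{(x,y)\sim P}\big[\tilde\ell(h^*,(x,y))\big]=\sum_{v\in\mathcal V}-p_v\log q^*_v\le \mathbb E_{(x,y)\sim P}\big[\tilde\ell(h,(x,y))\big]$$ for every soft classifier $h$.
   Context: Let $\mathcal X$ be a set and $\mathcal Y=\{-1,1\}$. Let $P$ be a probability distribution on $\mathcal X\times\mathcal Y$ with finite support $\mathcal V$, and write $p_v=P(\{v\})>0$ for $v\in\mathcal V$. Let $N$ assign to each $x\in\mathcal X$ a nonempty set $N(x)\subseteq\mathcal X$; for $v=(x,y)$ write $N(v)=N(x)$. A soft classifier is any function $h:\mathcal X\to[0,1]^{\mathcal Y}$ with $h(x)_1+h(x)_{-1}=1$ for all $x$. The conflict graph is the bipartite graph with vertex set $\mathcal V$, parts $\mathcal V_c=\mathcal V\cap(\mathcal X\times\{c\})$ for $c\in\{1,-1\}$, and edge set $\mathcal E$ consisting of the pairs $(u,v)\in\mathcal V_1\times\mathcal V_{-1}$ with $N(u)\cap N(v)\neq\emptyset$. Let $E\in\mathbb R^{\mathcal E\times\mathcal V}$ be its edge incidence matrix ($E_{e,w}=1$ if $w$ is an endpoint of $e$, else $0$), and $M=\begin{pmatrix}E\\ I\end{pmatrix}\in\mathbb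 R^{(\mathcal E\sqcup\mathcal V)\times\mathcal V}$. For a soft classifier $h$ and $v=(x,y)\in\mathcal V$, $q^h_v=\inf_{\tilde x\in N(x)}h(\tilde x)_y$. The robust cross-entropy loss of $h$ at $(x,y)$ is $\tilde\ell(h,(x,y))=\sup_{\tilde x\in N(x)}\big(-\log h(\tilde x)_y\big)$, with $-\log 0=+\infty$; $\log$ of $0$ in the objective is $-\infty$. *)

From HB Require Import structures.
From mathcomp Require Import all_boot all_order all_algebra.
From mathcomp Require Import all_classical all_reals.
From mathcomp Require Import ereal exp.
Set Implicit Arguments. Unset Strict Implicit. Unset Printing Implicit Defensive.
Import Order.TTheory GRing.Theory Num.Theory.
Local Open Scope ring_scope.
Local Open Scope classical_set_scope.

(* Labels: Y = {-1,1} encoded as bool, true = 1, false = -1. *)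

(* -log with the convention -log 0 = +oo (argument in [0,1] in all uses;
   nonpositive arguments are sent to +oo). *)
Definition nlog {R : realType} (t : R) : \bar R :=
  if t <= 0 then +oo%E else (- ln t)%:E.

Definition soft_classifier {R : realType} {X : Type} (h : X -> bool -> R) : Prop :=
  forall x, (forall b, 0 <= h x b <= 1) /\ h x true + h x false = 1.

Definition qh {R : realType} {X : Type} (N : X -> set X) (h : X -> bool -> R)
  (v : X * bool) : R :=
  inf [set h xt v.2 | xt in N v.1].

Definition robust_loss {R : realType} {X : Type} (N : X -> set X)
  (h : X -> bool -> R) (v : X * bool) : \bar R :=
  ereal_sup [set nlog (h xt v.2) | xt in N v.1].

(* Expectation over P with finite support V (embedded by emb), weights p *)
Definition expect {R : realType} {V : finType} (p : V -> R) (f : V -> \bar R) : \bar R :=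
  (\sum_(v : V) (p v)%:E * f v)%E.

Definition conflict_edge {X : Type} {V : finType} (emb : V -> X * bool)
  (N : X -> set X) (u v : V) : Prop :=
  (emb u).2 = true /\ (emb v).2 = false /\ (N (emb u).1 `&` N (emb v).1) !=set0.

(* feasibility: q >= 0 and M q <= 1, with M = [E; I]: rows of E give
   q_u + q_v <= 1 for every edge (u,v), rows of I give q_v <= 1 *)
Definition feasible {R : realType} {X : Type} {V : finType} (emb : V -> X * bool)
  (N : X -> set X) (q : V -> R) : Prop :=
  (forall v, 0 <= q v) /\
  (forall u v, conflict_edge emb N u v -> q u + q v <= 1) /\
  (forall v, q v <= 1).

Definition objective {R : realType} {V : finType} (p : V -> R) (q : V -> R) : \bar R :=
  expect p (fun v => nlog (q v)).

From HB Require Import structures.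
From mathcomp Require Import all_boot all_order all_algebra.
From mathcomp Require Import all_classical all_reals.
From mathcomp Require Import ereal exp.
From mathcomp Require Import all_analysis.
Import Order.TTheory GRing.Theory Num.Theory.
Import numFieldNormedType.Exports.
Local Open Scope ring_scope.
Local Open Scope classical_set_scope.

(* 1. For a soft classifier h, the robust loss at v equals -log q^h_v
      (robust_loss_qh), because -log is antitone and continuous, so the sup
      of -log h over N(x) is -log of the inf of h.  Moreover q^h is feasible
      (qh_feasible): neighbourhoods of conflicting points share a point x~,
      where h(x~)_1 + h(x~)_{-1} = 1.  Hence E[loss h] = objective(q^h) is at
      least the optimal value of the program.
   2. Conversely, from any feasible q we build a soft classifier hq with
      hq(x)_1 = max { q_u | u labelled 1, x in N(u) }, and then q <= q^hq
      (realising_qh).  Applied to a minimiser q*, this gives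
      E[loss h*] <= objective q*.
   3. A minimiser exists (exists_minimiser): every feasible q whose objective
      is below the value L at the constant vector 1/2 has q_v >= exp(-L/p_v),
      so it suffices to minimise the (finite, continuous) objective over the
      compact set of feasible vectors with these positive lower bounds. *)

Lemma nlog_anti (R : realType) (a b : R) : a <= b -> (nlog b <= nlog a)%E.
Proof.
move=> ab; rewrite /nlog.
have [a0|a0] := leP a 0; first by rewrite leey.
have b0 : ~~ (b <= 0) by rewrite -ltNge; exact: lt_le_trans ab.
by rewrite (negbTE b0) lee_fin lerN2 ler_ln ?posrE // ltNge.
Qed.

Lemma nlog_ge0 (R : realType) (a : R) : a <= 1 -> (0 <= nlog a)%E.
Proof.
move=> a1; rewrite /nlog; case: ifP => // _.
by rewrite lee_fin oppr_ge0 ln_le0.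
Qed.

Lemma expect_le (R : realType) (V : finType) (p : V -> R) (f g : V -> \bar R) :
  (forall v, 0 <= p v) -> (forall v, (f v <= g v)%E) -> (expect p f <= expect p g)%E.
Proof.
move=> p0 fg; rewrite /expect; apply: lee_sum => v _.
by apply: lee_wpmul2l; rewrite ?lee_fin.
Qed.

Section SoftClassifier.
Context {R : realType} {X : Type} {N : X -> set X} {h : X -> bool -> R}.
Hypothesis h_soft : soft_classifier h.

Lemma soft_ge0 x b : 0 <= h x b.
Proof. by have [/(_ b) /andP[]] := h_soft x. Qed.

Lemma soft_le1 x b : h x b <= 1.
Proof. by have [/(_ b) /andP[]] := h_soft x. Qed.

Lemma qh_lb {v xt} : N v.1 xt -> qh N h v <= h xt v.2.
Proof.
move=> Nx; apply: ge_inf; last by exists xt.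
by exists 0 => _ [y _ <-]; exact: soft_ge0.
Qed.

Lemma qh_glb v (c : R) : N v.1 !=set0 ->
  (forall xt, N v.1 xt -> c <= h xt v.2) -> c <= qh N h v.
Proof.
move=> [x Nx] lb; apply: lb_le_inf; first by exists (h x v.2), x.
by move=> _ [y Ny <-]; exact: lb.
Qed.

Lemma qh_ge0 v : N v.1 !=set0 -> 0 <= qh N h v.
Proof. by move=> Nne; apply: qh_glb => // xt _; exact: soft_ge0. Qed.

(* A finite bound a on every -log h(x~)_y bounds -log q^h_v as well, since
   it means h(x~)_y >= exp(-a) throughout the neighbourhood. *)
Lemma nlog_qh_le v (a : R) : N v.1 !=set0 ->
  (forall xt, N v.1 xt -> (nlog (h xt v.2) <= a%:E)%E) ->
  (nlog (qh N h v) <= a%:E)%E.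
Proof.
move=> Nne ub.
have qge : expR (- a) <= qh N h v.
  apply: qh_glb => // xt Nx; have := ub _ Nx; rewrite /nlog.
  case: ifP => // hpos; rewrite lee_fin lerNl => la.
  have hp : 0 < h xt v.2 by rewrite ltNge hpos.
  by rewrite -(lnK hp) ?posrE // ler_expR.
have qpos : 0 < qh N h v by exact: lt_le_trans (expR_gt0 _) qge.
rewrite /nlog ifF; last by rewrite leNgt qpos.
by rewrite lee_fin lerNl -[X in X <= _]expRK ler_ln ?posrE ?expR_gt0.
Qed.

Lemma robust_loss_qh v : N v.1 !=set0 -> robust_loss N h v = nlog (qh N h v).
Proof.
move=> Nne; apply/le_anti/andP; split.
  by apply: ge_ereal_sup => _ [xt Nx <-]; apply/nlog_anti/qh_lb.
have ub xt : N v.1 xt -> (nlog (h xt v.2) <= robust_loss N h v)%E.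
  by move=> Nx; apply: ereal_sup_ubound; exists xt.
have [x0 Nx0] := Nne.
have : (0 <= robust_loss N h v)%E by apply: le_trans (ub _ Nx0); apply/nlog_ge0/soft_le1.
case: (robust_loss N h v) ub => [a| |] ub // _; last by rewrite leey.
exact: nlog_qh_le.
Qed.

Lemma qh_feasible (V : finType) (emb : V -> X * bool) :
  (forall x, N x !=set0) -> feasible emb N (fun v => qh N h (emb v)).
Proof.
move=> Nne; split; [|split].
- by move=> v; exact: qh_ge0.
- move=> u v [u1 [v1 [xt [Nu Nv]]]].
  have := qh_lb Nu; have := qh_lb Nv; rewrite u1 v1 => hv hu.
  by have [_ <-] := h_soft xt; exact: lerD.
- move=> v; have [x Nx] := Nne (emb v).1.
  exact: le_trans (qh_lb Nx) (soft_le1 _ _).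
Qed.

End SoftClassifier.

Section Realisation.
Context {R : realType} {X : Type} {V : finType}.
Variables (emb : V -> X * bool) (N : X -> set X) (q : V -> R).
Hypothesis q_feas : feasible emb N q.

Definition score1 (x : X) : R :=
  \big[Num.max/0]_(u | (emb u).2 && `[< N (emb u).1 x >]) q u.

Definition realising_classifier (x : X) (b : bool) : R :=
  if b then score1 x else 1 - score1 x.

Lemma score1_ge0 x : 0 <= score1 x.
Proof.
have [q0 _] := q_feas.
by rewrite /score1; elim/big_ind: _ => // a b a0 b0; rewrite le_max a0.
Qed.

Lemma score1_le1 x : score1 x <= 1.
Proof. by have [_ [_ q1]] := q_feas; apply: bigmax_le. Qed.

Lemma realising_soft : soft_classifier realising_classifier.
Proof.
move=> x; split; last by rewrite /realising_classifier addrC subrK.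
have s0 := score1_ge0 x; have s1 := score1_le1 x.
by case; rewrite /realising_classifier ?s0 ?s1 // subr_ge0 s1 lerBlDr lerDl.
Qed.

(* The worst-case scores of the realising classifier dominate q: for label 1
   by construction, for label -1 because q_u + q_v <= 1 on conflict edges. *)
Lemma realising_qh : (forall x, N x !=set0) ->
  forall v, q v <= qh N realising_classifier (emb v).
Proof.
have [q0 [qe q1]] := q_feas; move=> Nne v.
apply: qh_glb => // xt Nxt; rewrite /realising_classifier.
case ev: (emb v).2.
  apply: (le_bigmax_cond _ (P := fun u => (emb u).2 && `[< N (emb u).1 xt >])).
  by rewrite ev /=; apply/asboolP.
rewrite lerBrDr -lerBrDl; apply: bigmax_le; first by rewrite subr_ge0.
move=> u /andP[eu /asboolP Nu]; rewrite lerBrDl addrC; apply: qe.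
by split; [|split; [|exists xt]].
Qed.

End Realisation.

(* A vector bounded by 1 whose objective is at most L has q_v >= exp(-L/p_v):
   the single term -p_v log q_v is already at most L. *)
Lemma objective_sublevel_lb (R : realType) (V : finType) (p q : V -> R) (L : R) v :
  (forall v, 0 < p v) -> (forall v, q v <= 1) ->
  (objective p q <= L%:E)%E -> expR (- L / p v) <= q v.
Proof.
move=> p_pos q1 oL.
have term : ((p v)%:E * nlog (q v) <= L%:E)%E.
  apply: le_trans oL; rewrite /objective /expect (bigD1 v) //=.
  apply: leeDl; apply: sume_ge0 => u _.
  by apply: mule_ge0; [rewrite lee_fin ltW|apply: nlog_ge0].
move: term; rewrite /nlog; case: ifP => [_|qpos].
  by rewrite gt0_muley ?lte_fin // leye_eq.
have qp : 0 < q v by rewrite ltNge qpos.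
rewrite -EFinM lee_fin => le1.
rewrite -(lnK qp) ?posrE // ler_expR.
by rewrite mulNr lerNl ler_pdivlMr // mulrC.
Qed.

Lemma closed_pair_le (R : realType) n (a b : 'I_n) :
  closed [set w : 'rV[R]_n | w ord0 a + w ord0 b <= 1].
Proof.
have -> : [set w : 'rV[R]_n | w ord0 a + w ord0 b <= 1] =
  (fun w : 'rV[R]_n => w ord0 a + w ord0 b) @^-1` [set x : R | x <= 1] by [].
apply: (proj1 (continuous_closedP _)); last exact: closed_le.
move=> w; exact: (cvgD (@coord_continuous R 1 n ord0 a w)
                      (@coord_continuous R 1 n ord0 b w)).
Qed.

Section Minimiser.
Context {R : realType} {X : Type} {V : finType}.
Variables (emb : V -> X * bool) (N : X -> set X) (p : V -> R).
Hypothesis p_pos : forall v, 0 < p v.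

(* Vectors indexed by V are identified with row vectors to use the topology
   of 'rV[R]_#|V|. *)
Definition coords (w : 'rV[R]_#|V|) : V -> R := fun v => w ord0 (enum_rank v).
Definition row_of (q : V -> R) : 'rV[R]_#|V| := \row_i q (enum_val i).

Lemma coords_row q : coords (row_of q) = q.
Proof. by apply/funext => v; rewrite /coords /row_of mxE enum_rankK. Qed.

(* Objective value of the feasible constant vector 1/2, and the induced
   positive lower bounds on the coordinates of better vectors. *)
Definition half_value : R := \sum_v p v * ln 2.
Definition lower (v : V) : R := expR (- half_value / p v).

(* The feasible vectors respecting these lower bounds: a box intersected with
   the conflict-edge half-spaces.  The objective is finite there. *)
Definition box : set 'rV[R]_#|V| :=
  [set w | forall i, `[lower (enum_val i), 1]%classic (w ord0 i)].

Definition edge_constrained : set 'rV[R]_#|V| :=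
  [set w | forall u v, conflict_edge emb N u v -> coords w u + coords w v <= 1].

Definition region : set 'rV[R]_#|V| := box `&` edge_constrained.

Definition finite_objective (w : 'rV[R]_#|V|) : R :=
  \sum_v p v * - ln (coords w v).

Lemma region_compact : compact region.
Proof.
apply: compact_closedI.
  by apply: (@rV_compact _ _ (fun i => `[lower (enum_val i), 1]%classic)) => i;
     exact: segment_compact.
have -> : edge_constrained =
    \bigcap_(uv in [set uv : V * V | conflict_edge emb N uv.1 uv.2])
      [set w : 'rV[R]_#|V| | w ord0 (enum_rank uv.1) + w ord0 (enum_rank uv.2) <= 1].
  apply/seteqP; split => w /=; first by move=> Ew [u v] /= ce; exact: Ew.
  by move=> Ew u v ce; exact: (Ew (u, v) ce).
by apply: closed_bigI => uv _; exact: closed_pair_le.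
Qed.

Lemma region_bounds {w} v : region w -> lower v <= coords w v <= 1.
Proof. by move=> [Bw _]; have := Bw (enum_rank v); rewrite /= in_itv /= enum_rankK. Qed.

Lemma region_pos {w} v : region w -> 0 < coords w v.
Proof.
by move=> /(region_bounds v) /andP[lv _]; exact: lt_le_trans (expR_gt0 _) lv.
Qed.

Lemma region_feasible w : region w -> feasible emb N (coords w).
Proof.
move=> Rw; split; [|split; [exact: Rw.2|]] => v.
  exact/ltW/region_pos.
by have /andP[] := region_bounds v Rw.
Qed.

Lemma feasible_region q : feasible emb N q ->
  (forall v, lower v <= q v) -> region (row_of q).
Proof.
move=> [_ [qe q1]] ql; split; last by rewrite /edge_constrained /= coords_row.
by move=> i; rewrite /= in_itv /= mxE ql q1.
Qed.

Lemma objective_finite w : region w -> objective p (coords w) = (finite_objective w)%:E.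
Proof.
move=> Rw; rewrite /objective /expect /finite_objective -sumEFin.
by apply: eq_bigr => v _; rewrite /nlog ifF ?leNgt ?region_pos // EFinM.
Qed.

Lemma finite_objective_continuous : {within region, continuous finite_objective}.
Proof.
apply: continuous_in_subspaceT => w /set_mem Rw.
apply: (@cvg_big R V +%R 0 xpredT add_continuous _ (nbhs w) (index_enum V)
  (fun v w => p v * - ln (coords w v)) (fun v => p v * - ln (coords w v))) => v _.
have ln_coord := continuous_comp (@coord_continuous R 1 _ ord0 (enum_rank v) w)
  (continuous_ln (region_pos v Rw)).
exact: continuousM (@cst_continuous _ _ (p v) w) (continuousN ln_coord).
Qed.

Lemma half_region : region (row_of (fun=> 2^-1)).
Proof.
have h1 : (2:R)^-1 <= 1 by rewrite invf_le1 // ler1n.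
apply: feasible_region.
  split; [by move=> v; rewrite invr_ge0 ler0n | split => // u v _].
  by rewrite -mulr2n -[_ *+ 2]mulr_natr mulVf.
move=> v; have -> : (2:R)^-1 = expR (- ln 2) by rewrite expRN lnK // posrE.
rewrite ler_expR mulNr lerN2 ler_pdivlMr // mulrC /half_value (bigD1 v) //= lerDl.
apply: sumr_ge0 => u _; apply: mulr_ge0; first exact: ltW.
by apply: ln_ge0; rewrite ler1n.
Qed.

Lemma finite_objective_half : finite_objective (row_of (fun=> 2^-1)) = half_value.
Proof.
by rewrite /finite_objective coords_row; apply: eq_bigr => v _; rewrite lnV ?posrE // opprK.
Qed.

(* The program attains its minimum: minimise the continuous objective over the
   compact region; vectors outside it are beaten by the vector 1/2. *)
Lemma exists_minimiser : exists qs : V -> R, feasible emb N qs /\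
  forall q, feasible emb N q -> (objective p qs <= objective p q)%E.
Proof.
have [c /set_mem Rc cmin] := compact_EVT_min (ex_intro _ _ half_region)
  region_compact finite_objective_continuous.
exists (coords c); split; first exact: region_feasible.
move=> q fq; rewrite objective_finite //.
have [oL|oL] := leP (objective p q) half_value%:E.
  have Rq : region (row_of q).
    apply: feasible_region => // v.
    by apply: objective_sublevel_lb => //; have [_ []] := fq.
  by rewrite -(coords_row q) objective_finite // lee_fin; apply/cmin/mem_set.
apply: le_trans (ltW oL); rewrite lee_fin -finite_objective_half.
exact/cmin/mem_set/half_region.
Qed.

End Minimiser.

Theorem theorem1 (R : realType) (X : Type) (V : finType)
  (emb : V -> X * bool) (p : V -> R) (N : X -> set X)
  (emb_inj : injective emb)
  (p_pos : forall v, 0 < p v)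
  (p_sum : \sum_(v : V) p v = 1)
  (N_ne : forall x, N x !=set0) :
  exists qstar : V -> R,
    feasible emb N qstar /\
    (forall q : V -> R, feasible emb N q -> (objective p qstar <= objective p q)%E) /\
    exists hstar : X -> bool -> R,
      soft_classifier hstar /\
      (forall v, qstar v <= qh N hstar (emb v)) /\
      expect p (fun v => robust_loss N hstar (emb v)) = objective p qstar /\
      (forall h : X -> bool -> R, soft_classifier h ->
         (objective p qstar <= expect p (fun v => robust_loss N h (emb v)))%E).
Proof.
have [qs [qs_feas qs_min]] := exists_minimiser emb N p p_pos.
have p_ge0 v : 0 <= p v by exact: ltW.
have loss_obj h : soft_classifier h ->
    expect p (fun v => robust_loss N h (emb v)) = objective p (fun v => qh N h (emb v)).
  by move=> sh; apply: eq_bigr => v _; rewrite (robust_loss_qh sh _ (N_ne _)).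
have lower_bound h : soft_classifier h ->
    (objective p qs <= expect p (fun v => robust_loss N h (emb v)))%E.
  by move=> sh; rewrite loss_obj //; exact/qs_min/qh_feasible.
pose hs := realising_classifier emb N qs.
have hs_soft : soft_classifier hs := realising_soft emb N qs qs_feas.
have hs_qh : forall v, qs v <= qh N hs (emb v) := realising_qh emb N qs qs_feas N_ne.
exists qs; split; first exact: qs_feas.
split; first exact: qs_min.
exists hs; split; first exact: hs_soft.
split; first exact: hs_qh.
split; last exact: lower_bound.
apply/le_anti/andP; split; last exact: lower_bound.
by rewrite loss_obj //; apply: expect_le => // v; exact: nlog_anti.
Qed.
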